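(* Let $V$ be a vector space of dimension $2r$ ($r\ge1$) over $\mathbb{F}_2$ with nondegenerate quadratic form $Q$, and suppose $V$ has a symmetric basis. (i) If $r\equiv 0$ or $1\pmod 4$, then $Q$ is hyperbolic. (ii) If $r\equiv 2$ or $3\pmod 4$, then $Q$ is elliptic.
   Context: The associated bilinear form of $Q$ is $B(u,v)=Q(u+v)-Q(u)-Q(v)$, and $Q$ is nondegenerate if $B$ is. $Q$ is hyperbolic if $V$ has a basis $e_1,\dots,e_r,f_1,\dots,f_r$ with $Q(e_i)=Q(f_i)=0$, $B(e_i,e_j)=B(f_i,f_j)=0$, $B(e_i,f_j)=\delta_{ij}$; it is elliptic if $V$ has a basis $e_1,\dots,e_{r-1},f_1,\dots,f_{r-1},x,y$ with the same relations among the $e_i,f_i$, all $e_i,f_i$ orthogonal to $x,y$, $Q(x)=Q(y)=1$, $B(x,y)=1$. (Every nondegenerate quadratic form on $\mathbb{F}_2^{2r}$ is exactly one of these.) A basis $\{v_1,\dots,v_{2r}\}$ is symmetric if $Q(v_i)=0$ for all $i$ and $B(v_i,v_j)=1$ for all $i\ne j$. *)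

From HB Require Import structures.
From mathcomp Require Import all_boot all_order all_algebra.
Set Implicit Arguments. Unset Strict Implicit. Unset Printing Implicit Defensive.
Import GRing.Theory.
Local Open Scope ring_scope.

Section QuadForms.
Variables (K : fieldType) (V : vectType K).

Definition assoc_bil (Q : V -> K) (u v : V) : K := Q (u + v) - Q u - Q v.

Definition quadratic_form (Q : V -> K) : Prop :=
  [/\ forall (a : K) (v : V), Q (a *: v) = a ^+ 2 * Q v,
      forall (a : K) (u w v : V),
        assoc_bil Q (a *: u + w) v = a * assoc_bil Q u v + assoc_bil Q w v
    & forall (a : K) (u v w : V),
        assoc_bil Q u (a *: v + w) = a * assoc_bil Q u v + assoc_bil Q u w].

Definition qf_nondegenerate (Q : V -> K) : Prop :=
  forall u : V, (forall v : V, assoc_bil Q u v = 0) -> u = 0.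

Definition qf_hyperbolic (r : nat) (Q : V -> K) : Prop :=
  exists (e f : 'I_r -> V),
    [/\ basis_of fullv ([seq e i | i <- enum 'I_r] ++ [seq f i | i <- enum 'I_r]),
        forall i, Q (e i) = 0 /\ Q (f i) = 0
      & forall i j, [/\ assoc_bil Q (e i) (e j) = 0, assoc_bil Q (f i) (f j) = 0
                      & assoc_bil Q (e i) (f j) = (i == j)%:R]].

Definition qf_elliptic (r : nat) (Q : V -> K) : Prop :=
  exists (e f : 'I_r.-1 -> V) (x y : V),
    [/\ basis_of fullv ([seq e i | i <- enum 'I_r.-1] ++ [seq f i | i <- enum 'I_r.-1]
                          ++ [:: x; y]),
        forall i, Q (e i) = 0 /\ Q (f i) = 0,
        forall i j, [/\ assoc_bil Q (e i) (e j) = 0, assoc_bil Q (f i) (f j) = 0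
                      & assoc_bil Q (e i) (f j) = (i == j)%:R],
        forall i, [/\ assoc_bil Q (e i) x = 0, assoc_bil Q (e i) y = 0,
                      assoc_bil Q (f i) x = 0 & assoc_bil Q (f i) y = 0]
      & [/\ Q x = 1, Q y = 1 & assoc_bil Q x y = 1]].

Definition qf_symmetric_basis (n : nat) (Q : V -> K) (v : 'I_n -> V) : Prop :=
  [/\ basis_of fullv [seq v i | i <- enum 'I_n],
      forall i, Q (v i) = 0
    & forall i j, i != j -> assoc_bil Q (v i) (v j) = 1].

End QuadForms.

From HB Require Import structures.
From mathcomp Require Import all_boot all_order all_algebra.
From mathcomp Require Import zify ring.
Set Implicit Arguments. Unset Strict Implicit. Unset Printing Implicit Defensive.
Import GRing.Theory.
Local Open Scope ring_scope.

(* Let [u] be a family of 2m vectors with [Q (u i) = b] and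
   [B (u i) (u j) = 1] for [i != j].  Then [u 0], [u 1] span a plane, hyperbolic
   if [b = 0] and anisotropic if [b = 1], and the vectors [u k + u 0 + u 1]
   (k >= 2) form a family of the same kind of type [b + 1], orthogonal to that
   plane.  Starting from a symmetric basis ([b = 0]), [V] thus splits into [r]
   orthogonal planes of alternating types, [r / 2] of them anisotropic.  Two
   orthogonal anisotropic planes span two hyperbolic ones, so [Q] is hyperbolic
   or elliptic according to the parity of [r / 2], i.e. to [r mod 4]. *)

Lemma map_enum_ord (T : Type) n (g : nat -> T) :
  [seq g (nat_of_ord i) | i <- enum 'I_n] = [seq g i | i <- iota 0 n].
Proof. by rewrite -val_enum_ord -map_comp. Qed.

(* The parity of the number [(m + b) / 2] of anisotropic planes among [m]
   planes of alternating types [b], [~~ b], [b], ... *)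
Definition arf m (b : bool) := odd (m + b)./2.

Lemma arfS m b : arf m.+1 b = b (+) arf m (~~ b).
Proof. by case: b; rewrite /arf /=; lia. Qed.

Lemma arf_false r : arf r false = (r %% 4 == 2)%N || (r %% 4 == 3)%N.
Proof. by rewrite /arf addn0; lia. Qed.

Section QuadraticForm.
Variables (K : fieldType) (V : vectType K) (Q : V -> K).
Hypothesis qfQ : quadratic_form Q.
Local Notation B := (assoc_bil Q).

Lemma qf0 : Q 0 = 0.
Proof. by case: qfQ => QZ _ _; rewrite -(scale0r 0) QZ expr0n mul0r. Qed.

Lemma assoc_bilC u v : B u v = B v u.
Proof. by rewrite /assoc_bil [v + u]addrC addrAC. Qed.

Lemma assoc_bil0l v : B 0 v = 0.
Proof. by rewrite /assoc_bil add0r qf0 subr0 subrr. Qed.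

Lemma assoc_bil0r v : B v 0 = 0.
Proof. by rewrite assoc_bilC assoc_bil0l. Qed.

Lemma assoc_bilDl u w v : B (u + w) v = B u v + B w v.
Proof. by case: qfQ => _ BZD _; rewrite -[u]scale1r BZD mul1r scale1r. Qed.

Lemma assoc_bilDr u v w : B u (v + w) = B u v + B u w.
Proof. by rewrite assoc_bilC assoc_bilDl !(assoc_bilC u). Qed.

Lemma assoc_bilZr a u v : B u (a *: v) = a * B u v.
Proof. by case: qfQ => _ _ BZD; rewrite -[a *: v]addr0 BZD assoc_bil0r addr0. Qed.

Lemma assoc_bil_sumr u (I : Type) (r : seq I) (P : pred I) (F : I -> V) :
  B u (\sum_(i <- r | P i) F i) = \sum_(i <- r | P i) B u (F i).
Proof. exact: (big_morph (B u) (assoc_bilDr u) (assoc_bil0r u)). Qed.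

Lemma qfD u v : Q (u + v) = Q u + Q v + B u v.
Proof. by rewrite /assoc_bil; ring. Qed.

Lemma assoc_bil_diag u : B u u = Q u *+ 2.
Proof.
case: qfQ => QZ _ _; rewrite /assoc_bil -[u + u]/(u *+ 2) -scaler_nat QZ.
rewrite -mulr_natr; ring.
Qed.

(* A family with a B-dual family is free: pairing a vanishing combination
   with the j-th dual vector extracts its j-th coefficient. *)
Lemma free_of_dual n (w w' : nat -> V) :
  (forall i j, (i < n)%N -> (j < n)%N -> B (w' j) (w i) = (i == j)%:R) ->
  free [seq w i | i <- iota 0 n].
Proof.
move=> dual; have size_w : size [seq w i | i <- iota 0 n] == n.
  by rewrite size_map size_iota.
have wE i : (i < n)%N -> [seq w i | i <- iota 0 n]`_i = w i.
  by move=> lt_in; rewrite (nth_map 0%N) ?size_iota // nth_iota.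
change (free (Tuple size_w)); apply/freeP => k k0 j; have := congr1 (B (w' j)) k0.
rewrite assoc_bil0r assoc_bil_sumr (bigD1 j) //= big1 => [|i ij].
  by rewrite wE // assoc_bilZr dual // eqxx mulr1 addr0.
have i'j : (i == j :> nat) = false by exact: negbTE.
by rewrite wE // assoc_bilZr dual // i'j mulr0.
Qed.

Definition symplectic_family n (e f : nat -> V) :=
  forall i j, (i < n)%N -> (j < n)%N ->
    [/\ B (e i) (e j) = 0, B (f i) (f j) = 0 & B (e i) (f j) = (i == j)%:R].

Definition pairs_seq n (e f : nat -> V) :=
  [seq e i | i <- iota 0 n] ++ [seq f i | i <- iota 0 n].

Lemma symplectic_free n e f : symplectic_family n e f -> free (pairs_seq n e f).
Proof.
move=> sym; pose w i := if (i < n)%N then e i else f (i - n)%N.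
have -> : pairs_seq n e f = [seq w i | i <- iota 0 (n + n)].
  rewrite iotaD map_cat add0n; congr (_ ++ _).
    by apply/eq_in_map => i; rewrite mem_iota add0n /w => /andP[_ ->].
  rewrite -{2}[n]addn0 iotaDl -map_comp; apply/eq_map => i.
  by rewrite /w /= ltnNge leq_addr addKn.
apply: (free_of_dual (w' := fun i => if (i < n)%N then f i else e (i - n)%N)).
move=> i j lt_i lt_j; rewrite /w; case: ltnP => j_n; case: ltnP => i_n.
- by rewrite assoc_bilC; case: (sym i j).
- have [_ -> _] := sym j (i - n)%N j_n ltac:(lia).
  by suff /negbTE -> : i != j by []; lia.
- have [-> _ _] := sym (j - n)%N i ltac:(lia) i_n.
  by suff /negbTE -> : i != j by []; lia.
- have [_ _ ->] := sym (j - n)%N (i - n)%N ltac:(lia) ltac:(lia).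
  by congr (_%:R); apply/eqP/eqP; lia.
Qed.

Lemma basis_of_symplectic n e f :
  \dim (fullv : {vspace V}) = (2 * n)%N -> symplectic_family n e f ->
  basis_of fullv (pairs_seq n e f).
Proof.
move=> dimV sym; rewrite basisEfree symplectic_free // subvf dimV.
by rewrite /pairs_seq size_cat !size_map size_iota; lia.
Qed.

End QuadraticForm.

Section CharacteristicTwo.
Variables (V : vectType 'F_2) (Q : V -> 'F_2).
Hypothesis qfQ : quadratic_form Q.
Local Notation B := (assoc_bil Q).

Lemma assoc_bilxx u : B u u = 0.
Proof.
by rewrite assoc_bil_diag // -mulr_natr (_ : 2%:R = 0) ?mulr0 //; apply/eqP.
Qed.

(* A hyperbolic ([b = false]) or anisotropic ([b = true]) plane. *)
Definition qplane (b : bool) (x y : V) := [/\ Q x = b%:R, Q y = b%:R & B x y = 1].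

Definition hyperbolic_family n (e f : nat -> V) :=
  symplectic_family Q n e f /\ forall i, (i < n)%N -> Q (e i) = 0 /\ Q (f i) = 0.

Definition orthogonal_to (s : seq V) (w : V) := forall z, z \in s -> B w z = 0.

Lemma orthogonal_to_cons a s w :
  orthogonal_to (a :: s) w <-> B w a = 0 /\ orthogonal_to s w.
Proof.
split=> [as_w | [wa sw] z]; last by rewrite inE => /orP[/eqP-> | /sw].
by split=> [|z zs]; apply: as_w; rewrite inE ?eqxx ?zs ?orbT.
Qed.

(* Holds in particular when [t] lies in the span of [s]. *)
Definition perp_le (t s : seq V) := forall w, orthogonal_to s w -> orthogonal_to t w.

Lemma perp_le_trans s t u : perp_le t s -> perp_le u t -> perp_le u s.
Proof. by move=> ts ut w /ts /ut. Qed.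

Lemma perp_le_cons a t s : perp_le t s -> perp_le (a :: t) (a :: s).
Proof.
by move=> ts w /orthogonal_to_cons[wa /ts sw]; apply/orthogonal_to_cons.
Qed.

Lemma perp_le_subset t s : {subset t <= s} -> perp_le t s.
Proof. by move=> ts w ws z /ts /ws. Qed.

Lemma orthogonal_toD s a b :
  orthogonal_to s a -> orthogonal_to s b -> orthogonal_to s (a + b).
Proof. by move=> sa sb z zs; rewrite (assoc_bilDl qfQ) sa // sb // addr0. Qed.

Definition fcons (x : V) (e : nat -> V) i := if i is i'.+1 then e i' else x.

Lemma pairs_seq_cons n p q e f :
  pairs_seq n.+1 (fcons p e) (fcons q f) =
  p :: [seq e i | i <- iota 0 n] ++ q :: [seq f i | i <- iota 0 n].
Proof. by rewrite /pairs_seq /= !(iotaDl 1 0) -!map_comp. Qed.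

Lemma perm_pairs_seq_cons n x y e f :
  perm_eq (pairs_seq n.+1 (fcons x e) (fcons y f))
    ([seq e i | i <- iota 0 n] ++ [seq f i | i <- iota 0 n] ++ [:: x; y]).
Proof. by rewrite pairs_seq_cons; apply/permP => a; rewrite /= !count_cat /=; lia. Qed.

Lemma mem_pairs_seq_cons n p q e f z :
  (z \in pairs_seq n.+1 (fcons p e) (fcons q f)) =
  [|| z == p, z == q | z \in pairs_seq n e f].
Proof. by rewrite pairs_seq_cons !(inE, mem_cat); congr (_ || _); rewrite orbCA. Qed.

Lemma mem_pairs_seq n (e f : nat -> V) i :
  (i < n)%N -> e i \in pairs_seq n e f /\ f i \in pairs_seq n e f.
Proof. by move=> lt_in; rewrite !mem_cat !map_f ?orbT // mem_iota. Qed.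

Lemma symplectic_family_cons n e f p q :
  symplectic_family Q n e f -> B p q = 1 ->
  orthogonal_to (pairs_seq n e f) p -> orthogonal_to (pairs_seq n e f) q ->
  symplectic_family Q n.+1 (fcons p e) (fcons q f).
Proof.
move=> sym pq p_perp q_perp [|i] [|j] //=; rewrite !ltnS => lt_i lt_j.
- by rewrite !assoc_bilxx.
- by have [ej fj] := mem_pairs_seq e f lt_j; rewrite !(p_perp, q_perp).
- have [ei fi] := mem_pairs_seq e f lt_i.
  by rewrite !(assoc_bilC Q _ p) !(assoc_bilC Q _ q) !(p_perp, q_perp).
- exact: sym.
Qed.

Lemma hyperbolic_family_cons n e f p q :
  hyperbolic_family n e f -> qplane false p q ->
  orthogonal_to (pairs_seq n e f) p -> orthogonal_to (pairs_seq n e f) q ->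
  hyperbolic_family n.+1 (fcons p e) (fcons q f).
Proof.
move=> [sym iso] [Qp Qq pq] p_perp q_perp.
by split=> [|[|i]]; [apply: symplectic_family_cons | | apply: iso].
Qed.

Lemma orthogonal_to_cat s t w :
  orthogonal_to (s ++ t) w <-> orthogonal_to s w /\ orthogonal_to t w.
Proof.
split=> [st | [sw tw] z]; last by rewrite mem_cat => /orP[/sw | /tw].
by split=> z zs; apply: st; rewrite mem_cat zs ?orbT.
Qed.

Lemma orthogonal_to_seq2 a b w :
  orthogonal_to [:: a; b] w <-> B w a = 0 /\ B w b = 0.
Proof.
split=> [ab | [wa wb] z]; last by rewrite !inE => /orP[] /eqP->.
by split; apply: ab; rewrite !inE eqxx ?orbT.
Qed.

Lemma orthogonal_to_pairs_cons n e f p q w :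
  orthogonal_to [:: p; q] w -> orthogonal_to (pairs_seq n e f) w ->
  orthogonal_to (pairs_seq n.+1 (fcons p e) (fcons q f)) w.
Proof.
move=> pqw efw z; rewrite mem_pairs_seq_cons => /or3P[/eqP-> | /eqP-> | /efw //].
  by apply: pqw; rewrite !inE eqxx.
by apply: pqw; rewrite !inE eqxx orbT.
Qed.

Lemma qplane_true_sum p q x y :
  qplane true p q -> qplane true x y -> orthogonal_to [:: x; y] p ->
  orthogonal_to [:: x; y] q ->
  [/\ qplane false (p + x) (q + x), qplane false (p + q + y) (p + q + x + y),
      orthogonal_to [:: p + q + y; p + q + x + y] (p + x)
    & orthogonal_to [:: p + q + y; p + q + x + y] (q + x)].
Proof.
move=> [Qp Qq Bpq] [Qx Qy Bxy] /orthogonal_to_seq2[Bpx Bpy] /orthogonal_to_seq2[Bqx Bqy].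
have [Bqp Byx] : B q p = 1 /\ B y x = 1 by rewrite !(assoc_bilC Q y) assoc_bilC.
have [Bxp Byp Bxq Byq] : [/\ B x p = 0, B y p = 0, B x q = 0 & B y q = 0].
  by rewrite !(assoc_bilC Q _ p) !(assoc_bilC Q _ q).
split; try apply/orthogonal_to_seq2; try split;
  rewrite !(qfD Q, assoc_bilDl qfQ, assoc_bilDr qfQ, assoc_bilxx) ?Qp ?Qq ?Qx ?Qy
    ?Bpq ?Bqp ?Bxy ?Byx ?Bpx ?Bpy ?Bqx ?Bqy ?Bxp ?Byp ?Bxq ?Byq;
  exact/eqP.
Qed.

Definition witt_seq n e f (x y : V) := pairs_seq n e f ++ [:: x; y].

Lemma mem_witt_seq n e f x y z :
  (z \in witt_seq n e f x y) = (z \in pairs_seq n e f) || (z \in [:: x; y]).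
Proof. exact: mem_cat. Qed.

(* [e], [f] span [m - c] orthogonal hyperbolic planes, orthogonal to the
   anisotropic plane spanned by [x], [y] if [c]; otherwise [x], [y] are junk. *)
Definition witt_decomposition m (c : bool) e f x y :=
  [/\ (c <= m)%N, hyperbolic_family (m - c) e f
    & c -> [/\ qplane true x y, orthogonal_to (pairs_seq (m - c) e f) x
                              & orthogonal_to (pairs_seq (m - c) e f) y]].

Lemma witt_decomposition_cons_hyperbolic m c e f x y p q :
  witt_decomposition m c e f x y -> qplane false p q ->
  orthogonal_to (witt_seq (m - c) e f x y) p ->
  orthogonal_to (witt_seq (m - c) e f x y) q ->
  witt_decomposition m.+1 c (fcons p e) (fcons q f) x y.
Proof.
move=> [c_le hyp an] pq /orthogonal_to_cat[p_perp pxy] /orthogonal_to_cat[q_perp qxy].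
have c_le' : (c <= m.+1)%N by apply: leq_trans c_le _.
rewrite /witt_decomposition subSn //; split=> //; first exact: hyperbolic_family_cons.
move=> /an[xy x_perp y_perp]; move: pxy qxy => /orthogonal_to_seq2[px py].
move=> /orthogonal_to_seq2[qx qy].
by split=> //; apply: orthogonal_to_pairs_cons => //; apply/orthogonal_to_seq2;
  rewrite !(assoc_bilC Q _ p) !(assoc_bilC Q _ q).
Qed.

Lemma witt_decomposition_cons_anisotropic m e f x y p q :
  witt_decomposition m false e f x y -> qplane true p q ->
  orthogonal_to (pairs_seq m e f) p -> orthogonal_to (pairs_seq m e f) q ->
  witt_decomposition m.+1 true e f p q.
Proof. by case; rewrite /witt_decomposition !subn1 /= subn0. Qed.

Lemma witt_decomposition_cons_merge m e f x y p q :
  witt_decomposition m true e f x y -> qplane true p q ->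
  orthogonal_to (witt_seq (m - 1) e f x y) p ->
  orthogonal_to (witt_seq (m - 1) e f x y) q ->
  witt_decomposition m.+1 false
    (fcons (p + x) (fcons (p + q + y) e)) (fcons (q + x) (fcons (p + q + x + y) f)) x y.
Proof.
move=> [m_gt0 hyp /(_ isT)[xy x_perp y_perp]] pq.
move=> /orthogonal_to_cat[p_perp pxy] /orthogonal_to_cat[q_perp qxy].
have [ea_fa eb_fb a_perp b_perp] := qplane_true_sum pq xy pxy qxy.
rewrite /witt_decomposition subn0; split=> //.
rewrite (_ : m.+1 = (m - 1).+2); last by move: m_gt0 => /=; lia.
apply: hyperbolic_family_cons => //.
- by apply: hyperbolic_family_cons => //; do !apply: orthogonal_toD.
- by apply: orthogonal_to_pairs_cons => //; apply: orthogonal_toD.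
- by apply: orthogonal_to_pairs_cons => //; apply: orthogonal_toD.
Qed.

Lemma witt_decomposition_cons m c b e f x y p q :
  witt_decomposition m c e f x y -> qplane b p q ->
  orthogonal_to (witt_seq (m - c) e f x y) p ->
  orthogonal_to (witt_seq (m - c) e f x y) q ->
  exists e' f' x' y', witt_decomposition m.+1 (b (+) c) e' f' x' y' /\
    perp_le (witt_seq (m.+1 - (b (+) c)) e' f' x' y')
            (p :: q :: witt_seq (m - c) e f x y).
Proof.
move=> dec pq p_perp q_perp; have c_le : (c <= m)%N by case: dec.
case: b pq => pq; rewrite ?addFb ?addTb; last first.
  exists (fcons p e), (fcons q f), x, y; split.
    exact: witt_decomposition_cons_hyperbolic.
  apply: perp_le_subset => z; rewrite subSn //.
  by rewrite mem_witt_seq mem_pairs_seq_cons !inE mem_witt_seq !inE -!orbA.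
case: c dec c_le p_perp q_perp => dec c_le p_perp q_perp /=.
  exists (fcons (p + x) (fcons (p + q + y) e)), (fcons (q + x) (fcons (p + q + x + y) f)).
  exists x, y.
  split; first exact: witt_decomposition_cons_merge.
  move=> w /orthogonal_to_cons[wp /orthogonal_to_cons[wq]].
  move=> /orthogonal_to_cat[w_pairs /orthogonal_to_seq2[wx wy]].
  have wD a b : B w a = 0 -> B w b = 0 -> B w (a + b) = 0.
    by move=> wa wb; rewrite (assoc_bilDr qfQ) wa wb addr0.
  rewrite subn0 (_ : m.+1 = (m - 1).+2); last by move: c_le => /=; lia.
  apply/orthogonal_to_cat; split; last exact/orthogonal_to_seq2.
  apply: orthogonal_to_pairs_cons; last apply: orthogonal_to_pairs_cons => //;
    by apply/orthogonal_to_seq2; split; do !apply: (wD).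
exists e, f, p, q; split.
  move: p_perp q_perp; rewrite subn0.
  move=> /orthogonal_to_cat[p_perp _] /orthogonal_to_cat[q_perp _].
  exact: witt_decomposition_cons_anisotropic dec pq p_perp q_perp.
apply: perp_le_subset => z; rewrite subn1 subn0 /=.
by rewrite mem_witt_seq !inE mem_witt_seq !inE => /or3P[] ->; rewrite ?orbT.
Qed.

Definition symmetric_family (b : bool) n (u : nat -> V) :=
  forall i j, (i < n)%N -> (j < n)%N -> Q (u i) = b%:R /\ B (u i) (u j) = (i != j)%:R.

Definition symmetric_shift (u : nat -> V) k := u k.+2 + u 0 + u 1.

(* Splitting off the plane of [u 0] and [u 1] leaves a symmetric family of the
   opposite type: [Q (u k + u 0 + u 1) = 3 b + 3 = b + 1]. *)
Lemma symmetric_family_shift b n u :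
  symmetric_family b n.+2 u ->
  [/\ qplane b (u 0) (u 1), symmetric_family (~~ b) n (symmetric_shift u),
      orthogonal_to [seq symmetric_shift u k | k <- iota 0 n] (u 0),
      orthogonal_to [seq symmetric_shift u k | k <- iota 0 n] (u 1)
    & perp_le (u 0 :: u 1 :: [seq symmetric_shift u k | k <- iota 0 n])
              [seq u i | i <- iota 0 n.+2]].
Proof.
move=> sym; have Qu i : (i < n.+2)%N -> Q (u i) = b%:R by move=> lt_i; case: (sym i i).
have Bu i j : (i < n.+2)%N -> (j < n.+2)%N -> B (u i) (u j) = (i != j)%:R.
  by move=> lt_i lt_j; case: (sym i j).
have u0_perp k : (k < n)%N -> B (u 0) (symmetric_shift u k) = 0.
  by move=> lt_k; rewrite /symmetric_shift !(assoc_bilDr qfQ) !Bu //; apply/eqP.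
have u1_perp k : (k < n)%N -> B (u 1) (symmetric_shift u k) = 0.
  by move=> lt_k; rewrite /symmetric_shift !(assoc_bilDr qfQ) !Bu //; apply/eqP.
split.
- by rewrite /qplane !Qu // Bu.
- move=> i j lt_i lt_j; rewrite /symmetric_shift !(qfD Q).
  rewrite !(assoc_bilDl qfQ) !(assoc_bilDr qfQ).
  rewrite !Qu // !Bu // !eqSS; split; first by case: (b); apply/eqP.
  by case: (i != j); apply/eqP.
- by move=> z /mapP[k]; rewrite mem_iota => /andP[_ lt_k] ->; apply: u0_perp.
- by move=> z /mapP[k]; rewrite mem_iota => /andP[_ lt_k] ->; apply: u1_perp.
move=> w w_perp z; have wu i : (i < n.+2)%N -> B w (u i) = 0.
  by move=> lt_i; apply: w_perp; rewrite map_f // mem_iota.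
rewrite !inE => /or3P[/eqP-> | /eqP-> | /mapP[k]]; rewrite ?wu //.
rewrite mem_iota => /andP[_ lt_k] ->.
by rewrite /symmetric_shift !(assoc_bilDr qfQ) !wu // !addr0.
Qed.

Lemma symmetric_basis_family n (v : 'I_n -> V) :
  qf_symmetric_basis Q v -> symmetric_family false n (fun i => oapp v 0 (insub i)).
Proof.
move=> [_ v_iso v_sym] i j lt_i lt_j.
rewrite (insubT (fun k => k < n)%N lt_i) (insubT (fun k => k < n)%N lt_j) /=.
split; first exact: v_iso.
have [eq_ij | ne_ij] := eqVneq i j.
  move: lt_i; rewrite eq_ij => lt_j'.
  by rewrite (bool_irrelevance lt_j' lt_j) assoc_bilxx.
by rewrite v_sym // -val_eqE.
Qed.

Lemma symmetric_family_decomposition m b u :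
  symmetric_family b m.*2 u ->
  exists e f x y, witt_decomposition m (arf m b) e f x y /\
    perp_le (witt_seq (m - arf m b) e f x y) [seq u i | i <- iota 0 m.*2].
Proof.
elim: m b u => [|m IH] b u sym_u.
  exists (fun _ => 0), (fun _ => 0), 0, 0; split; first by case: (b).
  move=> w _ z; rewrite sub0n mem_witt_seq /= !inE.
  by move=> /orP[] /eqP->; rewrite assoc_bil0r.
have [pq sym' p_perp q_perp u_perp] := symmetric_family_shift sym_u.
have [e [f [x [y [dec perp_e]]]]] := IH _ _ sym'.
have [e' [f' [x' [y' [dec' perp_e']]]]] :=
  witt_decomposition_cons dec pq (perp_e _ p_perp) (perp_e _ q_perp).
exists e', f', x', y'; rewrite arfS; split=> //.
by apply: perp_le_trans u_perp _; apply: perp_le_trans perp_e'; do 2!apply: perp_le_cons.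
Qed.

Lemma witt_decomposition_hyperbolic n e f x y :
  \dim (fullv : {vspace V}) = (2 * n)%N -> witt_decomposition n false e f x y ->
  qf_hyperbolic n Q.
Proof.
move=> dimV [_ hyp _]; rewrite subn0 in hyp; have [sym iso] := hyp.
exists (fun i : 'I_n => e i), (fun i : 'I_n => f i); split=> [|i|i j].
- by rewrite !map_enum_ord; exact: (basis_of_symplectic qfQ dimV sym).
- exact: iso.
- exact: sym.
Qed.

Lemma witt_decomposition_elliptic n e f x y :
  \dim (fullv : {vspace V}) = (2 * n)%N -> witt_decomposition n true e f x y ->
  qf_elliptic n Q.
Proof.
move=> dimV [n_gt0]; rewrite subn1 => -[sym iso] /(_ isT)[[Qx Qy Bxy] x_perp y_perp].
exists (fun i : 'I_n.-1 => e i), (fun i : 'I_n.-1 => f i), x, y.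
split=> [|i|i j|i|//].
- have dimV' : \dim (fullv : {vspace V}) = (2 * n.-1.+1)%N by rewrite prednK.
  rewrite !map_enum_ord -(perm_basis _ (perm_pairs_seq_cons _ _ _ _ _)).
  apply: (basis_of_symplectic qfQ dimV'); exact: symplectic_family_cons.
- exact: iso.
- exact: sym.
- have [ei fi] := mem_pairs_seq e f (ltn_ord i).
  rewrite !(assoc_bilC Q _ x) !(assoc_bilC Q _ y).
  by split; [apply: x_perp | apply: y_perp | apply: x_perp | apply: y_perp].
Qed.

End CharacteristicTwo.


Theorem lemma3p4 (r : nat) (V : vectType 'F_2) (Q : V -> 'F_2) :
  (1 <= r)%N ->
  \dim (fullv : {vspace V}) = (2 * r)%N ->
  quadratic_form Q ->
  qf_nondegenerate Q ->
  (exists v : 'I_(2 * r) -> V, qf_symmetric_basis Q v) ->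
  ((r %% 4 == 0)%N || (r %% 4 == 1)%N -> qf_hyperbolic r Q) /\
  ((r %% 4 == 2)%N || (r %% 4 == 3)%N -> qf_elliptic r Q).
Proof.
move=> _ dimV qfQ _ [v /(symmetric_basis_family qfQ)].
(* Naming the family hides [v], whose type ['I_(2 * r)] would block [mul2n]. *)
set u := fun i => _; rewrite mul2n => /(symmetric_family_decomposition qfQ).
move=> [e [f [x [y [dec _]]]]]; rewrite arf_false in dec; split=> r_mod.
  have r_mod' : ((r %% 4 == 2)%N || (r %% 4 == 3)%N) = false.
    by move: r_mod; case: (r %% 4)%N => [|[|[|[|k]]]].
  by rewrite r_mod' in dec; exact: witt_decomposition_hyperbolic dimV dec.
by rewrite r_mod in dec; exact: witt_decomposition_elliptic dimV dec.
Qed.
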